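(* Let $p$ be a prime and $\mathbf{d}=(d_1,\dots,d_l)$ integers with $0\le d_\lambda\le p-1$, and assume $\gamma:=\mathbb{D}_\mathbf{d}-p\ge 0$. Then there is an equality of multisets $$\{\{\,j-\operatorname{sht}(j)\mid 1\le j\le p-1\,\}\}\ \uplus\ \{\{0,-1,\dots,-\gamma\}\}=\Big\{\Big\{\theta\big(\tfrac{s}{r}\big)+i\ \Big|\ \tfrac{s}{r}\in F,\ \gcd(s,r)=1,\ 0\le i\le N_r-1\Big\}\Big\}.$$
   Context: $\mathbb{D}_\mathbf{d}=\sum_\lambda d_\lambda(d_\lambda+1)/2$. $\mathbf{I}^*=\{(\lambda,i)\mid 1\le\lambda\le l,\ 1\le i\le d_\lambda\}$. $\operatorname{sht}(j)=\sum_{(\lambda,i)\in\mathbf{I}^*}\lfloor ij/p\rfloor$ for positive integers $j$. $\theta(y)=1-\lfloor y\rfloor+\lfloor py\rfloor-\sum_{(\lambda,i)\in\mathbf{I}^*}\lfloor iy\rfloor$ for $y\in(0,1]$. $F=\big(\bigcup_{j=1}^{M}\frac1j\mathbb{Z}\big)\cap(0,1]$ with $M=\max_\lambda d_\lambda$, each element written in lowest terms $s/r$. $N_r=\#\{(\lambda,i)\in\mathbf{I}^*\mid r\mid i\}$. $\uplus$ denotes union of multisets (multiplicities add). *)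

From HB Require Import structures.
From mathcomp Require Import all_boot all_order all_algebra.
Set Implicit Arguments. Unset Strict Implicit. Unset Printing Implicit Defensive.
Import Order.TTheory GRing.Theory Num.Theory.

(* d : seq nat is the tuple (d_1,...,d_l); l = size d.
   I* = {(lambda,i) | 1 <= lambda <= l, 1 <= i <= d_lambda}. *)

Definition DD (d : seq nat) : nat := \sum_(dl <- d) (dl * dl.+1) %/ 2.

Definition sht (p : nat) (d : seq nat) (j : nat) : nat :=
  \sum_(dl <- d) \sum_(1 <= i < dl.+1) (i * j) %/ p.

Local Open Scope ring_scope.

Definition theta (p : nat) (d : seq nat) (y : rat) : int :=
  1 - Num.floor y + Num.floor (p%:R * y)
    - \sum_(dl <- d) \sum_(1 <= i < dl.+1) Num.floor (i%:R * y).

Definition maxd (d : seq nat) : nat := \max_(dl <- d) dl.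

(* F = (U_{j=1}^M (1/j) Z) ∩ (0,1], as a duplicate-free list of rationals;
   (1/j)Z ∩ (0,1] = { k/j | 1 <= k <= j }. *)
Definition Fset (d : seq nat) : seq rat :=
  undup (flatten [seq [seq (k%:R / j%:R : rat) | k <- iota 1 j]
                   | j <- iota 1 (maxd d)]).

Definition Nr (d : seq nat) (r : nat) : nat :=
  \sum_(dl <- d) count (fun i => (r %| i)%N) (iota 1 dl).

Definition lhs_ms (p : nat) (d : seq nat) : seq int :=
  [seq (j%:Z - (sht p d j)%:Z) | j <- iota 1 (p.-1)]
  ++ [seq - (k%:Z) | k <- iota 0 ((DD d - p).+1)].

(* right-hand multiset; an element x = s/r of F in lowest terms has
   r = denq x (and s = numq x). *)
Definition rhs_ms (p : nat) (d : seq nat) : seq int :=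
  flatten [seq [seq theta p d x + i%:Z
               | i <- iota 0 (Nr d `|denq x|%N)] | x <- Fset d].

From mathcomp Require Import all_boot all_order all_algebra.
From mathcomp Require Import zify ring.
Set Implicit Arguments. Unset Strict Implicit. Unset Printing Implicit Defensive.
Import Order.TTheory GRing.Theory Num.Theory.
Local Open Scope ring_scope.

(* theta is a step function on [0, 1]: moving from y' to the next breakpoint y
   (a fraction j/p or an element of F), each floor term floor(m y) increases by
   [denq y | m], so theta jumps by +1 at j/p and by -N_r at s/r in F.  A
   multiset of integers is determined by the counts #{x <= v}; the value
   j - sht j = theta(j/p) - 1 and the block theta(s/r) + [0, N_r) are exactly
   the levels crossed by these jumps, and {0, -1, ..., -gamma} are the levels
   between theta(1) = p - D_d and theta(0) = 1.  Telescoping the crossings over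
   all breakpoints of (0, 1] gives the equality of counts. *)

Definition ind (b : bool) : int := if b then 1 else 0.

Lemma count_ind (T : eqType) (a : pred T) (s : seq T) :
  (count a s)%:Z = \sum_(x <- s) ind (a x).
Proof.
elim: s => [|x s IH]; first by rewrite big_nil.
by rewrite /= big_cons PoszD IH; case: (a x).
Qed.

Lemma count_mem_range (a v : int) (n : nat) :
  (count_mem v [seq a + i%:Z | i <- iota 0 n])%:Z =
  ind (a <= v) - ind (a + n%:Z <= v).
Proof.
elim: n => [|n IH]; first by rewrite addr0 subrr.
rewrite -addn1 iotaD map_cat count_cat PoszD IH /= add0n addn0 /ind.
by do !case: ifP; lia.
Qed.

Lemma telescope_path (T : Type) (V : zmodType) (g h : T -> V) (x0 : T) (s : seq T) :
  path (fun a b => h b == g a) x0 s ->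
  \sum_(y <- s) (g y - h y) = g (last x0 s) - g x0.
Proof.
elim: s x0 => [|y s IH] x0 /=; first by rewrite big_nil subrr.
case/andP=> /eqP hy /IH sum_s.
by rewrite big_cons sum_s hy addrC addrA subrK.
Qed.

Section SortedPaths.
Variables (disp : Order.disp_t) (T : porderType disp).
Local Open Scope order_scope.

Lemma path_gap_free (P : pred T) (e : rel T) (x0 : T) (s : seq T) :
  path <%O x0 s -> (forall z, P z -> x0 < z -> z \in s) ->
  (forall a b, a \in x0 :: s -> b \in s -> a < b ->
     (forall z, P z -> a < z -> z < b -> False) -> e a b) ->
  path e x0 s.
Proof.
elim: s x0 => [//|y s IH] x0 /= /andP [x0y ys] all_in he.
have y_min : all (fun z => y < z) s := order_path_min lt_trans ys.
apply/andP; split.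
- apply: he; rewrite ?mem_head // => z Pz x0z zy.
  move: (all_in z Pz x0z); rewrite in_cons => /orP [/eqP zE|zs].
    by move: zy; rewrite zE ltxx.
  by move/allP: y_min => /(_ z zs) /lt_trans /(_ zy); rewrite ltxx.
- apply: IH => // [z Pz yz|a b a_in b_in].
    move: (all_in z Pz (lt_trans x0y yz)); rewrite in_cons => /orP [/eqP zE|//].
    by move: yz; rewrite zE ltxx.
  by apply: he; rewrite in_cons ?a_in ?b_in orbT.
Qed.

Lemma path_last_max (x0 y : T) (s : seq T) :
  path <%O x0 s -> y \in s -> {in s, forall z, z <= y} -> last x0 s = y.
Proof.
elim: s x0 => [//|a s IH] x0 /= /andP [_ as_path] y_in y_max.
have a_min : all (fun z => a < z) s := order_path_min lt_trans as_path.
case: s IH as_path y_in y_max a_min => [|b s] IH as_path.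
  by rewrite mem_seq1 => /eqP.
rewrite in_cons => /orP [/eqP ->|y_in] y_max a_min.
  have b_in : b \in [:: a, b & s] by rewrite !in_cons eqxx orbT.
  by move/andP: a_min => [/lt_le_trans ab _]; move: (ab _ (y_max b b_in)); rewrite ltxx.
by apply: IH => // z z_in; apply: y_max; rewrite in_cons z_in orbT.
Qed.

End SortedPaths.

Lemma floor_step (R : archiRealDomainType) (a b : R) : a < b ->
  (forall k : int, a < k%:~R -> k%:~R < b -> False) ->
  Num.floor b = Num.floor a + ind (b \is a Num.int).
Proof.
move=> ab no_int; set f := Num.floor a.
have /andP [fa af] := floor_itv a.
have b_le : b <= (f + 1)%:~R by rewrite leNgt; apply/negP; exact: no_int af.
case: (ltrP b (f + 1)%:~R) => b_lt.
- have fb : Num.floor b = f by apply: floor_def; rewrite b_lt (le_trans fa (ltW ab)).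
  rewrite fb /ind; case: ifP => [|_]; last by rewrite addr0.
  rewrite intrEfloor fb => /eqP bE.
  by move: (le_lt_trans fa ab); rewrite bE ltxx.
- have -> : b = (f + 1)%:~R by apply/eqP; rewrite eq_le b_le b_lt.
  by rewrite intr_int intrKfloor.
Qed.

Lemma floor_natr_div (R : archiRealFieldType) (n m : nat) : (0 < m)%N ->
  Num.floor (n%:R / m%:R : R) = (n %/ m)%:Z.
Proof.
move=> m_gt0; have m_pos : 0 < (m%:R : R) by rewrite ltr0n.
apply: floor_def; rewrite ler_pdivlMr // ltr_pdivrMr // -(PoszD _ 1) addn1.
by rewrite -!pmulrn -!natrM ler_nat ltr_nat leq_divM ltn_ceil.
Qed.

Lemma natr_mul_rat_int (m : nat) (y : rat) :
  (m%:R * y \is a Num.int) = (`|denq y| %| m)%N.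
Proof.
apply/idP/idP.
- move/ratArchimedean.intrP => [z hz].
  have mnum : m%:Z * numq y = z * denq y.
    apply: (@intr_inj rat); rewrite !rmorphM /= numqE mulrA -hz.
    by rewrite -[(m%:Z)%:~R]/(m%:R : rat).
  have : (denq y %| m%:Z * numq y)%Z by rewrite mnum dvdz_mull.
  by rewrite Gauss_dvdzl // coprimezE coprime_sym coprime_num_den.
- move=> /dvdnP [c ->].
  have -> : (c * `|denq y|)%:R * y = (c%:Z * numq y)%:~R.
    by rewrite intrM numqE natrM -mulrA [y * _]mulrC -[in RHS]absz_denq.
  exact: intr_int.
Qed.

Lemma count_mem_negated_range (v : int) (n : nat) :
  (count_mem v [seq - k%:Z | k <- iota 0 n])%:Z = ind (1 - n%:Z <= v) - ind (1 <= v).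
Proof.
have -> : [seq - k%:Z | k <- iota 0 n] = map -%R [seq 0 + k%:Z | k <- iota 0 n].
  by rewrite -map_comp; apply: eq_map => k /=; rewrite add0r.
rewrite count_map (eq_count (a2 := pred1 (- v))); last by move=> x; rewrite /= eqr_oppLR.
by rewrite count_mem_range /ind; do !case: ifP; lia.
Qed.

Section Breakpoints.
Variables (p : nat) (d : seq nat).
Hypothesis p_prime : prime p.
Hypothesis d_small : all (fun dl => dl <= p.-1)%N d.

Definition p_fractions : seq rat := [seq j%:R / p%:R | j <- iota 1 p.-1].
Definition breakpoints : seq rat := p_fractions ++ Fset d.

(* The three terms come from floor (p y), floor y and the sum over I*, see theta_jump. *)
Definition jump (y : rat) : int :=
  ind (`|denq y| %| p)%N - ind (`|denq y| %| 1)%N - (Nr d `|denq y|)%:Z.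

(* theta y - jump y is the value of theta just left of the breakpoint y. *)
Definition level_crossing (v : int) (y : rat) : int :=
  ind (theta p d y <= v) - ind (theta p d y - jump y <= v).

Let p_gt1 : (1 < p)%N := prime_gt1 p_prime.

Lemma leq_maxd dl : dl \in d -> (dl <= maxd d)%N.
Proof. move=> dl_in; exact: (@leq_bigmax_seq _ d xpredT id dl dl_in). Qed.

Lemma maxd_lt_p : (maxd d < p)%N.
Proof.
have : (maxd d <= p.-1)%N by apply/bigmax_leqP_seq => dl /(allP d_small).
by lia.
Qed.

Lemma mem_p_fractions y :
  reflect (exists2 j, (0 < j < p)%N & y = j%:R / p%:R) (y \in p_fractions).
Proof.
apply: (iffP mapP) => [[j]|[j j_lt ->]]; last by exists j; rewrite // mem_iota; lia.
by rewrite mem_iota => j_lt ->; exists j => //; lia.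
Qed.

Lemma mem_Fset y : reflect (exists2 j, (0 < j <= maxd d)%N &
  exists2 k, (0 < k <= j)%N & y = k%:R / j%:R) (y \in Fset d).
Proof.
rewrite /Fset mem_undup; apply: (iffP flatten_mapP).
- move=> [j]; rewrite mem_iota => j_lt /mapP [k]; rewrite mem_iota => k_lt ->.
  by exists j; [lia | exists k => //; lia].
- move=> [j j_lt [k k_lt ->]]; exists j; first by rewrite mem_iota; lia.
  by apply/mapP; exists k => //; rewrite mem_iota; lia.
Qed.

Lemma denq_dvd_natr_div (k j : nat) : (0 < j)%N -> (`|denq (k%:R / j%:R : rat)| %| j)%N.
Proof.
move=> j_gt0; rewrite -natr_mul_rat_int mulrC divfK ?natr_int //.
by rewrite pnatr_eq0 -lt0n.
Qed.

Lemma p_fraction_bounds y : y \in p_fractions -> 0 < y < 1.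
Proof.
case/mem_p_fractions => j j_lt ->.
by rewrite divr_gt0 ?ltr_pdivrMr ?mul1r ?ltr_nat ?ltr0n //; lia.
Qed.

Lemma denq_p_fraction y : y \in p_fractions -> `|denq y|%N = p.
Proof.
move=> y_in; have /mem_p_fractions [j _ yE] := y_in.
have /andP [y_gt0 y_lt1] := p_fraction_bounds y_in.
have /(primeP p_prime).2 /orP [/eqP den1|/eqP //] : (`|denq y| %| p)%N.
  by rewrite yE denq_dvd_natr_div ?prime_gt0.
have := natr_mul_rat_int 1 y; rewrite den1 dvdnn mul1r intrEfloor => /eqP.
by rewrite (floor_def (m := 0)) ?ltW ?y_lt1 // => y0; move: y_gt0; rewrite -y0 ltxx.
Qed.

Lemma Fset_bounds y : y \in Fset d -> [&& 0 < y, y <= 1 & (`|denq y| < p)%N].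
Proof.
case/mem_Fset => j j_le [k k_le yE].
have den_le : (`|denq y| <= j)%N by rewrite yE dvdn_leq ?denq_dvd_natr_div //; lia.
rewrite yE divr_gt0 ?ler_pdivrMr ?mul1r ?ler_nat ?ltr0n /=; try lia.
by rewrite -yE; have := maxd_lt_p; lia.
Qed.

Lemma breakpoint_bounds y : y \in breakpoints -> 0 < y <= 1.
Proof.
rewrite mem_cat => /orP [/p_fraction_bounds /andP [-> /ltW //]|].
by case/Fset_bounds/and3P => -> -> _.
Qed.

Lemma uniq_breakpoints : uniq breakpoints.
Proof.
rewrite cat_uniq undup_uniq andbT; apply/andP; split.
  rewrite map_inj_uniq ?iota_uniq // => a b /(mulIf _) ab.
  by apply/eqP; rewrite -(eqr_nat rat) ab // invr_eq0 pnatr_eq0; lia.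
apply/hasPn => y /Fset_bounds /and3P [_ _ den_lt]; apply/negP => /denq_p_fraction.
by lia.
Qed.

Lemma one_in_breakpoints : (p <= DD d)%N -> 1 \in breakpoints.
Proof.
move=> p_le_DD; rewrite mem_cat; apply/orP; right; apply/mem_Fset.
have maxd_gt0 : (0 < maxd d)%N.
  rewrite lt0n; apply: contraTneq p_le_DD => maxd0; rewrite -ltnNge /DD big1_seq //.
    by lia.
  move=> dl /andP [_ /leq_maxd]; rewrite maxd0 leqn0 => /eqP ->.
  by rewrite mul0n div0n.
by exists 1%N => //; exists 1%N; rewrite ?divr1.
Qed.

Section Gap.
Variables (y' y : rat).
Hypotheses (y'_ge0 : 0 <= y') (y'_lt_y : y' < y) (y_le1 : y <= 1).
Hypothesis no_breakpoint : forall z, z \in breakpoints -> y' < z -> z < y -> False.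

Lemma floor_natr_mul_step (m : nat) :
  (0 < m)%N -> [\/ m = p, m = 1%N | (m <= maxd d)%N] ->
  Num.floor (m%:R * y) = Num.floor (m%:R * y') + ind (`|denq y| %| m)%N.
Proof.
move=> m_gt0 m_cases; have m_pos : 0 < (m%:R : rat) by rewrite ltr0n.
rewrite -natr_mul_rat_int; apply: floor_step; first by rewrite ltr_pM2l.
case=> k k_lt k_gt //=; last first.
  by move: (le_lt_trans (mulr_ge0 (ler0n _ m) y'_ge0) k_lt); rewrite ltr0z.
have k_pos : (0 < k)%N.
  by rewrite lt0n; apply: contraTneq k_lt => ->; rewrite -leNgt mulr_ge0.
have k_lt_m : (k < m)%N.
  rewrite -(ltr_nat rat); apply: lt_le_trans k_gt _.
  by rewrite -[leRHS]mulr1 ler_wpM2l ?ler0n.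
apply: (no_breakpoint (z := k%:R / m%:R)).
- rewrite mem_cat; case: m_cases => [mE|m1|m_le].
  + by apply/orP; left; apply/mem_p_fractions; exists k; rewrite -?mE //; lia.
  + by lia.
  + by apply/orP; right; apply/mem_Fset; exists m; [lia | exists k => //; lia].
- by rewrite ltr_pdivlMr // mulrC.
- by rewrite ltr_pdivrMr // mulrC.
Qed.

Lemma theta_jump : theta p d y = theta p d y' + jump y.
Proof.
have floor1 := floor_natr_mul_step (isT : (0 < 1)%N) (Or32 _ _ (erefl 1%N)).
have floorp := floor_natr_mul_step (prime_gt0 p_prime) (Or31 _ _ (erefl p)).
rewrite !mul1r in floor1.
have floor_sum : \sum_(dl <- d) \sum_(1 <= i < dl.+1) Num.floor (i%:R * y) =
    \sum_(dl <- d) \sum_(1 <= i < dl.+1) Num.floor (i%:R * y') + (Nr d `|denq y|)%:Z.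
  rewrite /Nr (big_morph Posz PoszD (erefl _)) -big_split /=; apply: eq_big_seq => dl dl_in.
  rewrite count_ind /index_iota subSS subn0 -big_split /=; apply: eq_big_seq => i.
  rewrite mem_iota => i_in; apply: floor_natr_mul_step; first by lia.
  by apply: Or33; have := leq_maxd dl_in; lia.
by rewrite /theta /jump floor1 floorp floor_sum; ring.
Qed.

End Gap.

Lemma jump_p_fraction y : y \in p_fractions -> jump y = 1.
Proof.
move=> y_in; rewrite /jump denq_p_fraction // dvdnn dvdn1 (gtn_eqF p_gt1) /=.
rewrite /Nr big1_seq ?subr0 // => dl /andP [_ dl_in].
rewrite (@eq_in_count _ _ pred0) ?count_pred0 // => i; rewrite mem_iota => i_in /=.
by apply/negP => /dvdn_leq; have := allP d_small dl dl_in; lia.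
Qed.

Lemma jump_Fset y : y \in Fset d -> jump y = - (Nr d `|denq y|)%:Z.
Proof.
case/Fset_bounds/and3P => _ _ den_lt; rewrite /jump.
have -> : (`|denq y| %| p)%N = (`|denq y| %| 1)%N.
  rewrite dvdn1; apply/idP/eqP => [/(primeP p_prime).2 /orP [/eqP //|/eqP]|->].
    by lia.
  exact: dvd1n.
by rewrite subrr add0r.
Qed.

Lemma theta0 : theta p d 0 = 1.
Proof.
rewrite /theta mulr0 floor0 subr0 addr0 big1 ?subr0 // => dl _.
by rewrite big1 // => i _; rewrite mulr0 floor0.
Qed.

Lemma theta1 : theta p d 1 = p%:Z - (DD d)%:Z.
Proof.
rewrite /theta mulr1 floor1 (intrKfloor p) subrr add0r /DD.
rewrite (big_morph Posz PoszD (erefl _)); congr (_ - _); apply: eq_bigr => dl _.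
rewrite (eq_bigr (fun i => i%:Z)) => [|i _]; last by rewrite mulr1 (intrKfloor i).
rewrite -(big_morph Posz PoszD (erefl _)); congr Posz.
have := bin2_sum dl.+1; rewrite big_ltn // add0n => ->.
by rewrite bin2 divn2 mulnC.
Qed.

Lemma theta_p_fraction (j : nat) : (0 < j < p)%N ->
  theta p d (j%:R / p%:R) = 1 + j%:Z - (sht p d j)%:Z.
Proof.
move=> j_lt; have p_gt0 := prime_gt0 p_prime.
rewrite /theta [p%:R * _]mulrC divfK ?pnatr_eq0 -?lt0n // (intrKfloor j).
rewrite floor_natr_div // divn_small ?subr0; last by lia.
rewrite /sht (big_morph Posz PoszD (erefl _)); congr (_ - _); apply: eq_bigr => dl _.
rewrite (big_morph Posz PoszD (erefl _)); apply: eq_bigr => i _.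
by rewrite mulrA -natrM floor_natr_div.
Qed.

Lemma sorted_breakpoints : path <%O 0 (sort <=%O breakpoints).
Proof.
rewrite path_sortedE; last exact: lt_trans.
rewrite sort_lt_sorted uniq_breakpoints andbT; apply/allP => y.
by rewrite mem_sort => /breakpoint_bounds /andP [].
Qed.

Lemma theta_path :
  path (fun a b => theta p d b - jump b == theta p d a) 0 (sort <=%O breakpoints).
Proof.
apply: (path_gap_free (P := mem breakpoints)) sorted_breakpoints _ _ => [z|a b a_in b_in ab gap].
  by rewrite mem_sort.
have a_ge0 : 0 <= a.
  by move: a_in; rewrite in_cons mem_sort => /orP [/eqP -> //|/breakpoint_bounds /andP [/ltW]].
have /andP [_ b_le1] : 0 < b <= 1 by apply: breakpoint_bounds; rewrite -(mem_sort <=%O).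
by rewrite (theta_jump a_ge0 ab b_le1 gap) addrK.
Qed.

Lemma sum_level_crossings (v : int) : (p <= DD d)%N ->
  \sum_(y <- breakpoints) level_crossing v y =
  ind (theta p d 1 <= v) - ind (theta p d 0 <= v).
Proof.
move=> p_le_DD; rewrite -(perm_big _ (permEl (perm_sort <=%O breakpoints))).
rewrite (@telescope_path _ _ (fun y => ind (theta p d y <= v))
  (fun y => ind (theta p d y - jump y <= v)) 0).
  congr (ind (theta p d _ <= v) - _); apply: path_last_max sorted_breakpoints _ _.
    by rewrite mem_sort one_in_breakpoints.
  by move=> z; rewrite mem_sort => /breakpoint_bounds /andP [].
by apply: sub_path theta_path => a b /eqP <-.
Qed.

Lemma count_sht_values (v : int) :
  (count_mem v [seq j%:Z - (sht p d j)%:Z | j <- iota 1 p.-1])%:Z =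
  - \sum_(y <- p_fractions) level_crossing v y.
Proof.
rewrite count_ind big_map -sumrN big_map; apply: eq_big_seq => j.
rewrite mem_iota => j_lt; have y_in : j%:R / p%:R \in p_fractions.
  by apply/mem_p_fractions; exists j => //; lia.
rewrite /level_crossing jump_p_fraction // theta_p_fraction; last by lia.
by rewrite /ind /=; case: eqP; do !case: ifP; lia.
Qed.

Lemma count_rhs_ms (v : int) :
  (count_mem v (rhs_ms p d))%:Z = \sum_(y <- Fset d) level_crossing v y.
Proof.
rewrite count_flatten sumnE (big_morph Posz PoszD (erefl _)) !big_map.
apply: eq_big_seq => y y_in; rewrite count_mem_range /level_crossing.
by rewrite jump_Fset // opprK.
Qed.

End Breakpoints.

Theorem mainTheorem4 (p : nat) (d : seq nat) :
  prime p ->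
  all (fun dl => dl <= p.-1)%N d ->
  (p <= DD d)%N ->
  perm_eq (lhs_ms p d) (rhs_ms p d).
Proof.
move=> p_prime d_small p_le_DD; apply/allP => v _; rewrite /= -eqz_nat.
rewrite count_cat PoszD count_sht_values // count_mem_negated_range count_rhs_ms //.
have gammaE : 1 - (DD d - p).+1%:Z = theta p d 1 by rewrite theta1 //; lia.
rewrite gammaE -(theta0 p d) -sum_level_crossings // /breakpoints big_cat /=.
by rewrite addKr.
Qed.
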